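(* Let $(X,d)$ be a metric space and let $U\subseteq F_{USCB}(X)$. Then $U$ is relatively compact in $(F_{USCB}(X),H_{\rm send})$ if and only if $U(0)=\bigcup_{u\in U}[u]_0$ is relatively compact in $X$ and $U$ is equi-right-continuous at $0$.
   Context: A fuzzy set on $X$ is a function $u:X\to[0,1]$, with $\alpha$-cuts $[u]_\alpha=\{x: u(x)\ge\alpha\}$ for $\alpha\in(0,1]$ and $[u]_0=\overline{\{u>0\}}$. $F_{USC}(X)$ is the set of fuzzy sets with all $\alpha$-cuts ($\alpha\in[0,1]$) non-empty and closed; $F_{USCB}(X)=\{u\in F_{USC}(X): [u]_0\text{ is compact}\}$. The Hausdorff distance on non-empty closed subsets of a metric space $(Y,\rho)$ is $H(A,B)=\max\{\sup_{a\in A}\inf_{b\in B}\rho(a,b),\sup_{b\in B}\inf_{a\in A}\rho(a,b)\}$. $X\times[0,1]$ is metrized by $\overline{d}((x,\alpha),(y,\beta))=d(x,y)+|\alpha-\beta|$; ${\rm send}\,u=\{(x,t)\in X\times[0,1]: u(x)\ge t\}\cap([u]_0\times[0,1])$; $H_{\rm send}(u,v)=H({\rm send}\,u,{\rm send}\,v)$ (with $\rho=\overline{d}$). $U\subseteq F_{USC}(X)$ is equi-right-continuous at $0$ if for each $\varepsilon>0$ there is $\delta>0$ such that $H([u]_\delta,[u]_0)<\varepsilon$ (with $\rho=d$) for all $u\in U$. *)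

(* R : realType, sets from classical_sets,
   distances valued in extended reals \bar R (so that sup/inf are total). *)
From HB Require Import structures.
From mathcomp Require Import all_boot all_order all_algebra.
From mathcomp Require Import all_classical all_reals ereal.
Set Implicit Arguments. Unset Strict Implicit. Unset Printing Implicit Defensive.
Import Order.TTheory GRing.Theory Num.Theory.
Local Open Scope classical_set_scope.
Local Open Scope ring_scope.

Section Defs.
Variable R : realType.

Definition is_metric (X : Type) (d : X -> X -> R) : Prop :=
  (forall x y, 0 <= d x y) /\ (forall x y, d x y = 0 <-> x = y) /\
  (forall x y, d x y = d y x) /\ (forall x y z, d x z <= d x y + d y z).

Definition closure_in (T : Type) (M : set T) (rho : T -> T -> \bar R) (A : set T)
  : set T :=
  [set x | M x /\ forall e : R, 0 < e -> exists a, A a /\ (rho x a < e%:E)%E].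

Definition open_in (T : Type) (M : set T) (rho : T -> T -> \bar R) (G : set T)
  : Prop :=
  G `<=` M /\ forall x, G x -> exists2 e : R, 0 < e &
     [set y | M y /\ (rho x y < e%:E)%E] `<=` G.

Definition closed_in (T : Type) (M : set T) (rho : T -> T -> \bar R) (A : set T)
  : Prop := A `<=` M /\ closure_in M rho A `<=` A.

Definition compact_in (T : Type) (M : set T) (rho : T -> T -> \bar R) (K : set T)
  : Prop :=
  K `<=` M /\
  forall (I : Type) (G : I -> set T), (forall i, open_in M rho (G i)) ->
    K `<=` \bigcup_i G i ->
    exists (n : nat) (f : nat -> I), K `<=` \bigcup_(k in [set k | (k < n)%N]) G (f k).

Definition relcompact_in (T : Type) (M : set T) (rho : T -> T -> \bar R) (A : set T)
  : Prop := A `<=` M /\ compact_in M rho (closure_in M rho A).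

Definition hausdorff (T : Type) (rho : T -> T -> \bar R) (A B : set T) : \bar R :=
  Order.max
    (ereal_sup [set ereal_inf [set rho a b | b in B] | a in A])
    (ereal_sup [set ereal_inf [set rho a b | a in A] | b in B]).

Section Fuzzy.
Variables (X : Type) (d : X -> X -> R).

Definition dE : X -> X -> \bar R := fun x y => (d x y)%:E.

Definition is_fuzzy (u : X -> R) : Prop := forall x, 0 <= u x <= 1.

Definition cut (u : X -> R) (alpha : R) : set X := [set x | alpha <= u x].
Definition cut0 (u : X -> R) : set X := closure_in setT dE [set x | 0 < u x].
Definition cutA (u : X -> R) (alpha : R) : set X :=
  if alpha == 0 then cut0 u else cut u alpha.

Definition FUSC : set (X -> R) :=
  [set u | is_fuzzy u /\ forall alpha : R, 0 <= alpha <= 1 ->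
     cutA u alpha !=set0 /\ closed_in setT dE (cutA u alpha)].

Definition FUSCB : set (X -> R) :=
  [set u | FUSC u /\ compact_in setT dE (cut0 u)].

Definition dbar (p q : X * R) : \bar R := (d p.1 q.1 + `|p.2 - q.2|)%:E.

Definition send (u : X -> R) : set (X * R) :=
  [set p | 0 <= p.2 <= 1 /\ p.2 <= u p.1 /\ cut0 u p.1].

Definition Hsend (u v : X -> R) : \bar R := hausdorff dbar (send u) (send v).

Definition equi_right_cont0 (U : set (X -> R)) : Prop :=
  forall e : R, 0 < e -> exists2 delta : R, 0 < delta &
    forall u, U u -> (hausdorff dE (cutA u delta) (cut0 u) < e%:E)%E.

Definition U0 (U : set (X -> R)) : set X := \bigcup_(u in U) cut0 u.

End Fuzzy.
End Defs.

From HB Require Import structures.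
From mathcomp Require Import all_boot all_order all_algebra.
From mathcomp Require Import all_classical all_reals ereal.
From mathcomp Require Import lra.
Set Implicit Arguments. Unset Strict Implicit. Unset Printing Implicit Defensive.
Import Order.TTheory GRing.Theory Num.Theory.
Local Open Scope classical_set_scope.
Local Open Scope ring_scope.

(* Limits along a free ultrafilter [F] on [nat] replace subsequence extraction:
   a set is compact iff every sequence in it has an [F]-limit in it.
   If [U] is relatively compact, every sequence [u n] in [U] has an [F]-limit
   [v] in [F_USCB].  Points of [[u n]_0] are then close to the compact cut
   [[v]_0], so [U(0)] is relatively compact; and a level [delta > 0] at which
   [[v]_delta] approximates [[v]_0] transfers to the [u n], which gives
   equi-right-continuity.  Conversely, the Kuratowski limit [C] of the
   endographs [send (u n)], all lying in the compact box (closure of [U(0)]) x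
   [0, 1], is their Hausdorff [F]-limit, and it is the endograph of
   [v x = sup {t | (x, t) \in C}]; equi-right-continuity is exactly what makes
   the base [{x | (x, 0) \in C}] equal to [[v]_0], so that [v] is in [F_USCB]. *)

Lemma lte_fin_dense (R : realType) (z : \bar R) (e : R) :
  (z < e%:E)%E -> exists2 a : R, (z < a%:E)%E & a < e.
Proof.
case: z => [r| |] //=.
- by rewrite lte_fin => re; exists ((r + e) / 2); rewrite ?lte_fin; lra.
- by move=> _; exists (e - 1); rewrite ?ltNye //; lra.
Qed.

Lemma partial_choice (T : Type) (P : set nat) (Q : nat -> T -> Prop) :
  (exists n, P n) -> (forall n, P n -> exists x, Q n x) ->
  exists f : nat -> T, forall n, P n -> Q n (f n).
Proof.
move=> [n0 Pn0] hQ; have [x0 _] := hQ n0 Pn0.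
have /choice [f hf] : forall n, exists x, P n -> Q n x.
  by move=> n; case: (pselect (P n)) => [/hQ [x Qx]|nP]; [exists x | exists x0].
by exists f.
Qed.

Definition rcons_iter (T : Type) (p : seq T -> T) (n : nat) : seq T :=
  iter n (fun l => rcons l (p l)) [::].

Lemma size_rcons_iter T (p : seq T -> T) n : size (rcons_iter p n) = n.
Proof. by elim: n => //= n IH; rewrite size_rcons IH. Qed.

Lemma nth_rcons_iter T (p : seq T -> T) x0 n j : (j < n)%N ->
  nth x0 (rcons_iter p n) j = p (rcons_iter p j).
Proof.
elim: n => // n IH; rewrite ltnS leq_eqVlt => /orP[/eqP ->|jn] /=.
  by rewrite nth_rcons size_rcons_iter ltnn eqxx.
by rewrite nth_rcons size_rcons_iter jn IH.
Qed.

Section Hausdorff.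
Variables (R : realType) (T : Type) (rho : T -> T -> \bar R).

Lemma hausdorff_le (A B : set T) (s : R) :
  (forall a, A a -> exists2 b, B b & (rho a b < s%:E)%E) ->
  (forall b, B b -> exists2 a, A a & (rho a b < s%:E)%E) ->
  (hausdorff rho A B <= s%:E)%E.
Proof.
move=> hA hB; rewrite /hausdorff ge_max; apply/andP; split;
  apply: ge_ereal_sup => _ [x Ax <-].
- have [b Bb lt] := hA x Ax; apply: le_trans (ltW lt).
  by apply: ereal_inf_lbound; exists b.
- have [a Aa lt] := hB x Ax; apply: le_trans (ltW lt).
  by apply: ereal_inf_lbound; exists a.
Qed.

Lemma hausdorff_lt (A B : set T) (s : R) :
  (hausdorff rho A B < s%:E)%E ->
  (forall a, A a -> exists2 b, B b & (rho a b < s%:E)%E) /\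
  (forall b, B b -> exists2 a, A a & (rho a b < s%:E)%E).
Proof.
rewrite /hausdorff gt_max => /andP[ltA ltB]; split.
- move=> a Aa; have inf_lt : (ereal_inf [set rho a b | b in B] < s%:E)%E.
    by apply: le_lt_trans ltA; apply: ereal_sup_ubound; exists a.
  by have [_ [b Bb <-] lt] := ereal_inf_lt inf_lt; exists b.
- move=> b Bb; have inf_lt : (ereal_inf [set rho a b | a in A] < s%:E)%E.
    by apply: le_lt_trans ltB; apply: ereal_sup_ubound; exists b.
  by have [_ [a Aa <-] lt] := ereal_inf_lt inf_lt; exists a.
Qed.

Lemma hausdorffC (A B : set T) : (forall a b, rho a b = rho b a) ->
  hausdorff rho A B = hausdorff rho B A.
Proof.
move=> rhoC; rewrite [in RHS](_ : rho = fun a b => rho b a); last first.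
  by apply/funext => a; apply/funext => b.
by rewrite /hausdorff maxC.
Qed.

End Hausdorff.

(* The triangle inequality is phrased through finite upper bounds so that no
   arithmetic in [\bar R] is needed. *)
Definition ext_pseudometric (R : realType) (T : Type) (rho : T -> T -> \bar R) :=
  [/\ forall x y, rho x y = rho y x,
      forall x y z (a b : R),
        (rho x y < a%:E)%E -> (rho y z < b%:E)%E -> (rho x z < (a + b)%:E)%E
    & forall x (e : R), 0 < e -> (rho x x < e%:E)%E].

Section MetricFacts.
Variables (R : realType) (X : Type) (d : X -> X -> R).
Hypothesis hd : is_metric d.

Lemma d_ge0 x y : 0 <= d x y. Proof. by case: hd. Qed.
Lemma d_xx x : d x x = 0. Proof. by case: hd => _ [/(_ x x) [_ ->]]. Qed.
Lemma d_sym x y : d x y = d y x. Proof. by case: hd => _ [_ []]. Qed.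
Lemma d_tri x y z : d x z <= d x y + d y z. Proof. by case: hd => _ [_ []]. Qed.

Lemma ext_pseudometric_dE : ext_pseudometric (dE d).
Proof.
split=> [x y|x y z a b|x e e0]; rewrite /dE ?lte_fin.
- by rewrite d_sym.
- by move=> xy yz; apply: le_lt_trans (d_tri x y z) _; exact: ltrD.
- by rewrite d_xx.
Qed.

Lemma dbar_level x y t : dbar d (x, t) (y, t) = dE d x y.
Proof. by rewrite /dbar subrr normr0 addr0. Qed.

Lemma dbar_lt_fst p q (e : R) : (dbar d p q < e%:E)%E -> d p.1 q.1 < e.
Proof. by rewrite lte_fin => h; have := normr_ge0 (p.2 - q.2); lra. Qed.

Lemma dbar_lt_snd p q (e : R) : (dbar d p q < e%:E)%E -> `|p.2 - q.2| < e.
Proof. by rewrite lte_fin => h; have := d_ge0 p.1 q.1; lra. Qed.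

Lemma dbar_sym p q : dbar d p q = dbar d q p.
Proof. by rewrite /dbar d_sym distrC. Qed.

Lemma dbar_tri p q r (a b : R) :
  (dbar d p q < a%:E)%E -> (dbar d q r < b%:E)%E -> (dbar d p r < (a + b)%:E)%E.
Proof.
rewrite /dbar !lte_fin => pq qr.
by have := d_tri p.1 q.1 r.1; have := ler_distD q.2 p.2 r.2; lra.
Qed.

Lemma ext_pseudometric_dbar : ext_pseudometric (dbar d).
Proof.
split=> [||p e e0]; [exact: dbar_sym | exact: dbar_tri |].
by rewrite /dbar d_xx subrr normr0 addr0 lte_fin.
Qed.

Lemma ext_pseudometric_Hsend : ext_pseudometric (Hsend d).
Proof.
have [_ _ dbar_refl] := ext_pseudometric_dbar.
split=> [u v|u v w a b|u e e0].
- by rewrite /Hsend (hausdorffC _ _ dbar_sym).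
- move=> /lte_fin_dense [a' /hausdorff_lt [uv vu] a'a].
  move=> /lte_fin_dense [b' /hausdorff_lt [vw wv] b'b].
  apply: le_lt_trans (_ : (_ <= (a' + b')%:E)%E) _; last by rewrite lte_fin; lra.
  apply: hausdorff_le => [p /uv [q /vw [r wr qr] pq]|r /wv [q /vu [p up pq] qr]].
    by exists r => //; exact: dbar_tri pq qr.
  by exists p => //; exact: dbar_tri pq qr.
- apply: le_lt_trans (_ : (_ <= (e / 2)%:E)%E) _; last by rewrite lte_fin; lra.
  by apply: hausdorff_le => p sp; exists p => //; apply: dbar_refl; rewrite divr_gt0.
Qed.

Lemma cut0_gt0 u x : 0 < u x -> cut0 d u x.
Proof.
move=> ux; split => // e e0; exists x; split => //.
by case: ext_pseudometric_dE => _ _; apply.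
Qed.

Lemma cutA_gt0 u a : 0 < a -> cutA d u a = cut u a.
Proof. by move=> a0; rewrite /cutA gt_eqF. Qed.

Lemma send_cut0 u x : is_fuzzy u -> cut0 d u x -> send d u (x, 0).
Proof. by move=> fu cx; split; [rewrite /= lexx ler01 | have /andP[] := fu x]. Qed.

Lemma FUSC_send_top u : FUSC d u -> exists x, send d u (x, 1).
Proof.
move=> [fu /(_ 1)]; rewrite /cutA oner_eq0 lexx ler01 => /(_ isT) [[x ux] _].
exists x; split; first by rewrite /= ler01 lexx.
by split => //; apply: cut0_gt0; apply: lt_le_trans ux.
Qed.

(* A point b of [cut0 u] is close to some (y, t) in [send v]; y is close to a z
   of height at least [delta], and (z, delta) is close to a point of [send u]
   lying at height at least [a]. *)
Lemma hausdorff_cut_cut0_le u v (a delta eta r : R) :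
  is_fuzzy u -> is_fuzzy v -> 0 < a -> 0 < eta -> 0 <= r -> a + r <= delta ->
  (forall y, cut0 d v y -> exists2 z, delta <= v z & d y z < eta) ->
  (Hsend d u v < r%:E)%E ->
  (hausdorff (dE d) (cutA d u a) (cut0 d u) <= (eta + r + r)%:E)%E.
Proof.
move=> fu fv a0 eta0 r0 ard approx /hausdorff_lt [uv vu].
rewrite cutA_gt0 //; apply: hausdorff_le => [x ux|b cb].
  exists x; first exact: cut0_gt0 (lt_le_trans a0 ux).
  by case: ext_pseudometric_dE => _ _; apply; lra.
have [[y t] [_ [_ cy]] by_] := uv _ (send_cut0 fu cb).
have [z vz yz] := approx y cy.
have svz : send d v (z, delta).
  have /andP[_ vz1] := fv z.
  split; first by apply/andP; split => /=; lra.
  by split => //; apply: cut0_gt0 => /=; lra.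
have [[w s] [_ [sw _]] wz] := vu _ svz.
exists w.
  move: (dbar_lt_snd wz) sw; rewrite ltr_norml /= => /andP[lo _] sw.
  by rewrite /cut /=; lra.
have := dbar_lt_fst wz; have := dbar_lt_fst by_; rewrite /dE lte_fin /= => by' wz'.
by have := d_tri w z b; have := d_tri z y b; rewrite (d_sym z y) (d_sym y b); lra.
Qed.

End MetricFacts.

Section UltraLimits.
Variables (R : realType) (F : set_system nat).
Context {F_ultra : UltraFilter F}.
Hypothesis F_free : \oo `<=` F.

Lemma natSinv_gt0 (n : nat) : 0 < n.+1%:R^-1 :> R.
Proof. by rewrite invr_gt0 ltr0Sn. Qed.

Lemma ultra_natSinv_lt (e : R) : 0 < e -> F [set n | n.+1%:R^-1 < e].
Proof.
move=> e0; have : 0 <= e^-1 by rewrite invr_ge0 ltW.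
move=> /archi_boundP; set N := Num.bound _ => hN.
apply: F_free; exists N => // n /= Nn.
rewrite -[e]invrK ltf_pV2 ?posrE ?invr_gt0 //; apply: lt_le_trans hN _.
by rewrite ler_nat; apply: leq_trans Nn _.
Qed.

Lemma ultra_gt (m : nat) : F [set n | (m < n)%N].
Proof. by apply: F_free; exists m.+1. Qed.

Lemma ultra_setU (A B : set nat) : F (A `|` B) -> F A \/ F B.
Proof.
move=> FAB; have [FA|FnA] := in_ultra_setVsetC A F_ultra; [by left | right].
by apply: filterS (filterI FAB FnA) => n [[An|//] /(_ An)].
Qed.

Lemma ultra_contra (A : set nat) : ~ F (~` A) -> F A.
Proof. by case: (in_ultra_setVsetC A F_ultra). Qed.

Lemma ultra_bigcup N (A : nat -> set nat) :
  F (\bigcup_(k in [set k | (k < N)%N]) A k) -> exists2 k, (k < N)%N & F (A k).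
Proof.
elim: N => [|N IH] FA.
  by exfalso; apply: (filter_not_empty F); apply: filterS FA => n [].
have : F (\bigcup_(k in [set k | (k < N)%N]) A k `|` A N).
  apply: filterS FA => n [k /=]; rewrite ltnS leq_eqVlt => /orP[/eqP ->|kN] Akn.
    by right.
  by left; exists k.
case/ultra_setU => [/IH [k kN FAk]|FAN]; last by exists N.
by exists k => //; exact: ltnW.
Qed.

Definition ulim (T : Type) (rho : T -> T -> \bar R) (s : nat -> T) (x : T) :=
  forall e : R, 0 < e -> F [set n | (rho x (s n) < e%:E)%E].

Lemma ultra_lim01 (t : nat -> R) : F [set n | 0 <= t n <= 1] ->
  exists L : R, forall e : R, 0 < e -> F [set n | `|L - t n| < e].
Proof.
move=> Ft01; pose S := [set r : R | F [set n | r <= t n]].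
have S0 : S 0 by apply: filterS Ft01 => n /andP[].
have S_le1 : ubound S 1.
  move=> r Sr; rewrite leNgt; apply/negP => r1; apply: (filter_not_empty F).
  by apply: filterS (filterI Sr Ft01) => n [/= rt /andP[_ t1]]; lra.
have supS : has_sup S by split; [exists 0 | exists 1].
exists (sup S) => e e0; have e2 : 0 < e / 2 by rewrite divr_gt0.
have notS : ~ S (sup S + e / 2) by move=> /(sup_upper_bound supS); lra.
have [r Sr ltr] := sup_adherent e2 supS.
have [//|Flt] := in_ultra_setVsetC [set n | sup S + e / 2 <= t n] F_ultra.
apply: filterS (filterI Flt Sr) => n [/= /negP]; rewrite -ltNge => h1 h2.
by rewrite ltr_norml; apply/andP; split; lra.
Qed.

Section Space.
Variables (T : Type) (M : set T) (rho : T -> T -> \bar R).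
Hypothesis rho_pm : ext_pseudometric rho.
Let rho_sym : forall x y, rho x y = rho y x.
Proof. by case: rho_pm. Qed.
Let rho_tri : forall x y z (a b : R),
  (rho x y < a%:E)%E -> (rho y z < b%:E)%E -> (rho x z < (a + b)%:E)%E.
Proof. by case: rho_pm. Qed.
Let rho_refl : forall x (e : R), 0 < e -> (rho x x < e%:E)%E.
Proof. by case: rho_pm. Qed.

Definition ball_in (x : T) (e : R) := [set y | M y /\ (rho x y < e%:E)%E].

Lemma open_in_ball x e : open_in M rho (ball_in x e).
Proof.
split=> [y [] //|y [My lt]]; have [a lta ae] := lte_fin_dense lt.
exists (e - a); first by rewrite subr_gt0.
by move=> z [Mz lz]; split => //; have := rho_tri lta lz; rewrite addrC subrK.
Qed.

Lemma sub_closure_in A : A `<=` M -> A `<=` closure_in M rho A.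
Proof. by move=> AM a Aa; split; [exact: AM | exists a; split => //; exact: rho_refl]. Qed.

Lemma closed_in_closure A : closed_in M rho (closure_in M rho A).
Proof.
split=> [x [] //|x [Mx clx]]; split => // e e0.
have e2 : 0 < e / 2 by rewrite divr_gt0.
have [y [[_ cly] xy]] := clx _ e2; have [a [Aa ya]] := cly _ e2.
by exists a; split => //; have := rho_tri xy ya; rewrite -splitr.
Qed.

Lemma closure_in_ulim A s x : M x -> ulim rho s x -> F [set n | A (s n)] ->
  closure_in M rho A x.
Proof.
move=> Mx sx FA; split => // e e0.
by have [n [lt An]] := filter_ex (filterI (sx e e0) FA); exists (s n).
Qed.

(* The finite subcover in [compact_in] is indexed by some [f : nat -> I], so
   an empty index type [I] is never admissible and compact sets are inhabited. *)
Lemma compact_in_nonempty K : compact_in M rho K -> exists x, K x.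
Proof.
move=> [_ cover]; apply: contrapT => K0.
have K_set0 : K `<=` \bigcup_(i : False) set0 by move=> x Kx; case: K0; exists x.
have [n [f _]] := cover False (fun _ => set0)
  (fun=> conj (@sub0set _ M) (fun _ => False_ind _)) K_set0.
by case: (f 0%N).
Qed.

Lemma relcompact_in_nonempty A : relcompact_in M rho A -> exists a, A a.
Proof.
move=> [_ /compact_in_nonempty [x [_ clx]]].
by have [a [Aa _]] := clx 1 ltr01; exists a.
Qed.

Lemma compact_in_ulim K s : compact_in M rho K -> F [set n | K (s n)] ->
  exists2 x, K x & ulim rho s x.
Proof.
move=> [KM cover] FK; apply: contrapT => nolim.
have /choice [ef hef] : forall x : {x | K x}, exists e : R,
    0 < e /\ ~ F [set n | (rho (sval x) (s n) < e%:E)%E].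
  move=> [x Kx]; apply: contrapT => h; apply: nolim; exists x => //.
  by move=> e e0; apply: contrapT => nF; apply: h; exists e.
pose G x := ball_in (sval x) (ef x).
have [|N [f Kf]] := cover _ G (fun x => open_in_ball _ _).
  move=> y Ky; exists (exist _ y Ky) => //.
  by split; [exact: KM | exact: rho_refl (hef _).1].
have FG : F (\bigcup_(k in [set k | (k < N)%N]) [set n | G (f k) (s n)]).
  by apply: filterS FK => n /Kf [k kN Gk]; exists k.
have [k _ {}FG] := ultra_bigcup FG.
by apply: (hef (f k)).2; apply: filterS FG => n [].
Qed.

Section UltraCompact.
Variable K : set T.
Hypothesis K_ulim : forall s, (forall n, K (s n)) -> exists2 x, K x & ulim rho s x.

Lemma lebesgue_number (I : Type) (G : I -> set T) :
  (forall i, open_in M rho (G i)) -> K `<=` \bigcup_i G i ->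
  exists2 eps : R, 0 < eps & forall x, K x -> exists i, ball_in x eps `<=` G i.
Proof.
move=> Gop cover; apply: contrapT => noeps.
have /choice [s hs] : forall n, exists x,
    K x /\ forall i, ~ ball_in x n.+1%:R^-1 `<=` G i.
  move=> n; apply: contrapT => h; apply: noeps.
  exists n.+1%:R^-1; first exact: natSinv_gt0.
  move=> x Kx; apply: contrapT => h2; apply: h; exists x; split => // i Gi.
  by apply: h2; exists i.
have [z Kz sz] := K_ulim (fun n => (hs n).1).
have [i _ Gz] := cover z Kz; have [e e0 zG] := (Gop i).2 z Gz.
have e2 : 0 < e / 2 by rewrite divr_gt0.
have [n [zn ne]] := filter_ex (filterI (sz _ e2) (ultra_natSinv_lt e2)).
case: ((hs n).2 i) => y [My ny]; apply: zG; split => //.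
have {}ny : (rho (s n) y < (e / 2)%:E)%E by apply: lt_trans ny _; rewrite lte_fin.
by have := rho_tri zn ny; rewrite -splitr.
Qed.

Lemma totally_bounded x0 (eps : R) : K x0 -> 0 < eps ->
  exists n (f : nat -> T), (forall k, K (f k)) /\
    K `<=` \bigcup_(k in [set k | (k < n)%N]) [set y | (rho (f k) y < eps%:E)%E].
Proof.
(* Otherwise a greedily chosen sequence of pairwise [eps]-separated points of
   [K] would have an [F]-limit. *)
move=> Kx0 eps0; apply: contrapT => nonet.
pose x0' : {x | K x} := exist _ x0 Kx0.
have /choice [pick far] : forall l : seq {x | K x}, exists y : {x | K x},
    forall k, (k < size l)%N -> ~ (rho (sval (nth x0' l k)) (sval y) < eps%:E)%E.
  move=> l; apply: contrapT => nofar; apply: nonet.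
  exists (size l), (fun k => sval (nth x0' l k)); split => [k|y Ky].
    exact: svalP.
  move/forallNP: nofar => /(_ (exist _ y Ky)) /existsNP [k].
  by move=> /not_implyP [kl /contrapT lt]; exists k.
have [z _ zx] := K_ulim (fun n => svalP (pick (rcons_iter pick n))).
have e2 : 0 < eps / 2 by rewrite divr_gt0.
have [m zm] := filter_ex (zx _ e2).
have [n [zn mn]] := filter_ex (filterI (zx _ e2) (ultra_gt m)).
have := far (rcons_iter pick n) m; rewrite size_rcons_iter nth_rcons_iter //.
apply => //; move: zm => /=; rewrite rho_sym => zm.
by have := rho_tri zm zn; rewrite -splitr.
Qed.

Lemma compact_in_of_ulim x0 : K `<=` M -> K x0 -> compact_in M rho K.
Proof.
move=> KM Kx0; split => // I G Gop cover.
have [eps eps0 leb] := lebesgue_number Gop cover.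
have [n [f [Kf net]]] := totally_bounded Kx0 eps0.
have [g hg] := choice (fun k => leb (f k) (Kf k)).
exists n, g => y Ky; have [k kn lt] := net y Ky.
by exists k => //; apply: hg; split => //; exact: KM.
Qed.

End UltraCompact.

Lemma relcompact_in_of_ulim A a0 : A `<=` M -> A a0 ->
  (forall s, (forall n, A (s n)) -> exists2 x, M x & ulim rho s x) ->
  relcompact_in M rho A.
Proof.
move=> AM Aa0 A_ulim; split => //.
suff cl_ulim : forall w, (forall n, closure_in M rho A (w n)) ->
    exists2 x, closure_in M rho A x & ulim rho w x.
  by apply: (compact_in_of_ulim cl_ulim (x0 := a0)); [move=> x [] | exact: sub_closure_in].
move=> w clw.
have /choice [s hs] : forall n, exists a, A a /\ (rho (w n) a < n.+1%:R^-1%:E)%E.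
  move=> n; have [_ /(_ _ (natSinv_gt0 n)) [a [Aa lt]]] := clw n.
  by exists a.
have [x Mx sx] := A_ulim s (fun n => (hs n).1).
exists x; first by apply: closure_in_ulim Mx sx _; apply: filterE => n; exact: (hs n).1.
move=> e e0; have e2 : 0 < e / 2 by rewrite divr_gt0.
apply: filterS (filterI (sx _ e2) (ultra_natSinv_lt e2)) => n [xs ne].
have sw : (rho (s n) (w n) < (e / 2)%:E)%E.
  by rewrite rho_sym; apply: lt_trans (hs n).2 _; rewrite lte_fin.
by have := rho_tri xs sw; rewrite -splitr.
Qed.

Lemma relcompact_in_ulim A s : relcompact_in M rho A -> (forall n, A (s n)) ->
  exists2 x, M x & ulim rho s x.
Proof.
move=> [AM cA] As.
have [x [Mx _] sx] := compact_in_ulim cA (filterE _ (fun n => sub_closure_in AM (As n))).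
by exists x.
Qed.

End Space.

Section Fuzzy.
Variables (X : Type) (d : X -> X -> R).
Hypothesis hd : is_metric d.
Variable U : set (X -> R).
Hypothesis hU : U `<=` FUSCB d.

Local Notation dE_pm := (ext_pseudometric_dE hd).
Local Notation Hsend_pm := (ext_pseudometric_Hsend hd).

Lemma cut0_near_cut v (eta : R) : FUSCB d v -> 0 < eta ->
  exists2 delta : R, 0 < delta &
    forall y, cut0 d v y -> exists2 z, delta <= v z & d y z < eta.
Proof.
move=> [_ cv] eta0; apply: contrapT => nodelta.
have /choice [s hs] : forall n, exists y,
    cut0 d v y /\ forall z, n.+1%:R^-1 <= v z -> ~ d y z < eta.
  move=> n; apply: contrapT => h; apply: nodelta.
  exists n.+1%:R^-1; first exact: natSinv_gt0.
  move=> y cy; apply: contrapT => h2; apply: h; exists y; split => // z vz yz.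
  by apply: h2; exists z.
have [y [_ cly] sy] := compact_in_ulim dE_pm cv (filterE _ (fun n => (hs n).1)).
have eta2 : 0 < eta / 2 by rewrite divr_gt0.
have [z [vz yz]] := cly _ eta2.
have [n [yn nz]] := filter_ex (filterI (sy _ eta2) (ultra_natSinv_lt vz)).
have snz : d (s n) z < eta.
  move: yn yz; rewrite /= /dE !lte_fin => yn yz.
  by have := d_tri hd (s n) y z; rewrite (d_sym hd (s n) y); lra.
exact: (hs n).2 z (ltW nz) snz.
Qed.

Lemma ulim_of_near_compact (K : set X) (s : nat -> X) : compact_in setT (dE d) K ->
  (forall e : R, 0 < e -> F [set n | exists2 a, K a & d (s n) a < e]) ->
  exists2 z, K z & ulim (dE d) s z.
Proof.
move=> cK Knear; have [a0 Ka0] := compact_in_nonempty cK.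
pose D n := [set d (s n) a | a in K].
have infD n : has_inf (D n).
  by split; [exists (d (s n) a0), a0 | exists 0 => _ [a _ <-]; exact: d_ge0].
have D_le n a : K a -> inf (D n) <= d (s n) a.
  by move=> Ka; apply: (ge_inf (infD n).2); exists a.
have /choice [z hz] : forall n, exists z, K z /\ d (s n) z < inf (D n) + n.+1%:R^-1.
  move=> n; have [_ [z Kz <-] lt] := inf_adherent (natSinv_gt0 n) (infD n).
  by exists z.
have [w Kw zw] := compact_in_ulim dE_pm cK (filterE _ (fun n => (hz n).1)).
exists w => // e e0; have e3 : 0 < e / 3 by rewrite divr_gt0.
apply: filterS (filterI (zw _ e3) (filterI (Knear _ e3) (ultra_natSinv_lt e3))).
move=> n [wz [[a Ka sa] /= ne]].
have Da := D_le n a Ka.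
have := (hz n).2; move: wz; rewrite /= /dE !lte_fin => wz sz.
move: (n.+1%:R^-1) ne sz => q ne sz.
by have := d_tri hd w (z n) (s n); rewrite (d_sym hd (z n) (s n)); lra.
Qed.

Lemma relcompact_equi_right_cont0 :
  relcompact_in (FUSCB d) (Hsend d) U -> equi_right_cont0 d U.
Proof.
move=> relU e e0; apply: contrapT => noequi.
have /choice [u hu] : forall n, exists u,
    U u /\ ~ (hausdorff (dE d) (cutA d u n.+1%:R^-1) (cut0 d u) < e%:E)%E.
  move=> n; apply: contrapT => h; apply: noequi.
  exists n.+1%:R^-1; first exact: natSinv_gt0.
  by move=> u Uu; apply: contrapT => h2; apply: h; exists u.
have [v Fv uv] := relcompact_in_ulim Hsend_pm relU (fun n => (hu n).1).
have e4 : 0 < e / 4 by rewrite divr_gt0.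
have [delta delta0 approx] := cut0_near_cut Fv e4.
have delta2 : 0 < delta / 2 by rewrite divr_gt0.
pose r := Num.min (e / 4) (delta / 2).
have r0 : 0 < r by rewrite lt_min e4 delta2.
have re : r <= e / 4 by rewrite ge_min lexx.
have rdelta : r <= delta / 2 by rewrite ge_min lexx orbT.
have [n [vu ndelta]] := filter_ex (filterI (uv _ r0) (ultra_natSinv_lt delta2)).
have [Hsend_sym _ _] := Hsend_pm.
move: ndelta vu; rewrite /= Hsend_sym => ndelta uvn.
have nrdelta : n.+1%:R^-1 + r <= delta by move: (n.+1%:R^-1) ndelta => a ?; lra.
apply: (hu n).2; apply: le_lt_trans (hausdorff_cut_cut0_le hd (hU (hu n).1).1.1 Fv.1.1
  (natSinv_gt0 n) e4 (ltW r0) nrdelta approx uvn) _.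
by rewrite lte_fin; lra.
Qed.

Lemma relcompact_U0 :
  relcompact_in (FUSCB d) (Hsend d) U -> relcompact_in setT (dE d) (U0 d U).
Proof.
move=> relU; have [u0 Uu0] := relcompact_in_nonempty relU.
have [x0 [_ [_ cx0]]] := FUSC_send_top hd (hU Uu0).1.
apply: (relcompact_in_of_ulim dE_pm (a0 := x0)) => //; first by exists u0.
move=> s sU0; have /choice [u hu] : forall n, exists u, U u /\ cut0 d u (s n).
  by move=> n; have [u Uu cu] := sU0 n; exists u.
have [v [_ cv] uv] := relcompact_in_ulim Hsend_pm relU (fun n => (hu n).1).
suff [z _ sz] : exists2 z, cut0 d v z & ulim (dE d) s z by exists z.
apply: ulim_of_near_compact cv _ => e e0.
apply: filterS (uv e e0) => n /= /hausdorff_lt [_ near].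
have [[a t] [_ [_ ca]] ast] := near _ (send_cut0 (hU (hu n).1).1.1 (hu n).2).
by exists a => //; rewrite (d_sym hd); exact: dbar_lt_fst ast.
Qed.

Section LimitFuzzySet.
Hypothesis hY : relcompact_in setT (dE d) (U0 d U).
Hypothesis heq : equi_right_cont0 d U.
Variable u : nat -> X -> R.
Hypothesis hu : forall n, U (u n).

Local Notation Y := (closure_in setT (dE d) (U0 d U)).

Definition send_lim : set (X * R) := [set p | forall e : R, 0 < e ->
  F [set n | exists2 q, send d (u n) q & (dbar d p q < e%:E)%E]].

Lemma send_sub_box n q : send d (u n) q -> Y q.1 /\ 0 <= q.2 <= 1.
Proof.
move=> [q01 [_ cq]]; split => //.
by apply: (sub_closure_in dE_pm (@subsetT _ _)); exists (u n).
Qed.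

Lemma ulim_in_box (p : nat -> X * R) :
  F [set n | Y (p n).1 /\ 0 <= (p n).2 <= 1] -> exists q, ulim (dbar d) p q.
Proof.
move=> Fp.
have [x _ px] := compact_in_ulim dE_pm hY.2 (filterS (fun n (h : _ /\ _) => h.1) Fp).
have [L pL] := ultra_lim01 (filterS (fun n (h : _ /\ _) => h.2) Fp).
exists (x, L) => e e0; have e2 : 0 < e / 2 by rewrite divr_gt0.
apply: filterS (filterI (px _ e2) (pL _ e2)) => n [/=]; rewrite /dE lte_fin => xp Lp.
by rewrite /dbar lte_fin /=; lra.
Qed.

Lemma send_lim_sub_box p : send_lim p -> Y p.1 /\ 0 <= p.2 <= 1.
Proof.
move=> Cp; split.
  split => // e e0; have [n [q sq pq]] := filter_ex (Cp e e0).
  exists q.1; split; first by exists (u n) => //; case: sq => _ [].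
  by rewrite /dE lte_fin; exact: dbar_lt_fst pq.
have near01 (e : R) : 0 < e -> exists2 t : R, 0 <= t <= 1 & `|p.2 - t| < e.
  move=> e0; have [n [q [q01 _] pq]] := filter_ex (Cp e e0).
  by exists q.2 => //; move: pq; apply: dbar_lt_snd.
apply/andP; split; rewrite leNgt; apply/negP => h.
- have /near01 [t /andP[t0 _]] : 0 < - p.2 by lra.
  by rewrite ltr_norml => /andP[? ?]; lra.
- have /near01 [t /andP[_ t1]] : 0 < p.2 - 1 by lra.
  by rewrite ltr_norml => /andP[? ?]; lra.
Qed.

Lemma closure_send_lim p : closure_in setT (dbar d) send_lim p -> send_lim p.
Proof.
move=> [_ clp] e e0; have e2 : 0 < e / 2 by rewrite divr_gt0.
have [c [Cc pc]] := clp _ e2.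
apply: filterS (Cc _ e2) => n [q sq cq]; exists q => //.
by have := dbar_tri hd pc cq; rewrite -splitr.
Qed.

Lemma send_lim_down x t s : send_lim (x, t) -> 0 <= s <= t -> send_lim (x, s).
Proof.
move=> Cxt /andP[s0 st] e e0; apply: filterS (Cxt e e0) => n [[y t'] sq lq].
move: sq => [/andP[t0 t1] [ty cy]]; rewrite /= in t0 t1 ty cy.
(* Lowering (y, t') to height [min s t'] keeps it in [send (u n)] and moves it
   no farther from (x, s) than it was from (x, t). *)
have min_close : `|s - Num.min s t'| <= `|t - t'|.
  case: (lerP s t') => h; first by rewrite subrr normr0.
  have e1 : 0 <= s - t' by rewrite subr_ge0 ltW.
  have e2 : 0 <= t - t' by rewrite subr_ge0; apply: le_trans st; exact: ltW.
  by rewrite (ger0_norm e1) (ger0_norm e2); lra.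
have min_ge0 : 0 <= Num.min s t' by rewrite le_min s0 t0.
have min_le : Num.min s t' <= t' by rewrite ge_min lexx orbT.
exists (y, Num.min s t').
  by split; [apply/andP; split => /=; lra | split => //=; lra].
by move: lq; rewrite /dbar !lte_fin /=; lra.
Qed.

Lemma send_lim_ulim (p : nat -> X * R) c :
  F [set n | send d (u n) (p n)] -> ulim (dbar d) p c -> send_lim c.
Proof.
by move=> Fp pc e e0; apply: filterS (filterI Fp (pc e e0)) => n [? ?]; exists (p n).
Qed.

Lemma send_lim_top : exists x, send_lim (x, 1).
Proof.
have /choice [x hx] : forall n, exists x, send d (u n) (x, 1).
  by move=> n; apply: (FUSC_send_top hd); exact: (hU (hu n)).1.
have [y _ xy] :=
  compact_in_ulim dE_pm hY.2 (filterE _ (fun n => (send_sub_box (hx n)).1)).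
exists y; apply: (send_lim_ulim (p := fun n => (x n, 1))) (filterE _ hx) _.
by move=> e e0; apply: filterS (xy e e0) => n; rewrite /= dbar_level.
Qed.

Lemma send_lim_lift (e : R) : 0 < e -> exists2 delta : R, 0 < delta &
  forall x, send_lim (x, 0) -> exists2 z, send_lim (z, delta) & d x z < e.
Proof.
move=> e0; have e4 : 0 < e / 4 by rewrite divr_gt0.
have [delta delta0 u_delta] := heq e4.
exists delta => // x Cx.
pose A := [set n | exists2 q, send d (u n) q & (dbar d (x, 0%R) q < (e / 4)%:E)%E].
have FA : F A := Cx _ e4.
have /(partial_choice (filter_ex FA)) [z hz] : forall n, A n ->
    exists z, send d (u n) (z, delta) /\ d x z < e / 2.
  move=> n [[y t] [_ [_ cy]] xy].
  have [z uz zy] := (hausdorff_lt (u_delta _ (hu n))).2 y cy.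
  move: uz; rewrite cutA_gt0 // /cut /= => uz.
  have /andP[_ uz1] := (hU (hu n)).1.1 z.
  exists z; split.
    split; first by apply/andP; split => /=; lra.
    by split => //; apply: (cut0_gt0 hd); rewrite /=; lra.
  move: zy (dbar_lt_fst xy); rewrite /dE lte_fin /= => zy xy'.
  by have := d_tri hd x y z; rewrite (d_sym hd y z); lra.
have [w _ zw] := compact_in_ulim dE_pm hY.2
  (filterS (fun n An => (send_sub_box (hz n An).1).1) FA).
exists w.
  apply: (send_lim_ulim (p := fun n => (z n, delta))) _ _.
    exact: filterS (fun n An => (hz n An).1) FA.
  by move=> e' e'0; apply: filterS (zw e' e'0) => n; rewrite /= dbar_level.
have [n [wz An]] := filter_ex (filterI (zw _ e4) FA).
have := (hz n An).2; move: wz; rewrite /= /dE lte_fin => wz xz.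
by have := d_tri hd x (z n) w; rewrite (d_sym hd (z n) w); lra.
Qed.

(* [sup set0 = 0], so [lim_fuzzy] vanishes off the base of [send_lim]. *)
Definition lim_fuzzy (x : X) : R := sup [set t | send_lim (x, t)].

Lemma has_sup_send_lim x t : send_lim (x, t) -> has_sup [set t | send_lim (x, t)].
Proof.
move=> Cxt; split; first by exists t.
by exists 1 => s /send_lim_sub_box [_ /andP[]].
Qed.

Lemma send_lim_lim_fuzzy x : send_lim (x, 0) -> send_lim (x, lim_fuzzy x).
Proof.
move=> C0; apply: closure_send_lim; split => // e e0.
have [t Ct lt] := sup_adherent e0 (has_sup_send_lim C0).
have tle := sup_upper_bound (has_sup_send_lim C0) Ct.
exists (x, t); split => //.
by rewrite /dbar /lim_fuzzy (d_xx hd) add0r lte_fin /= ger0_norm ?subr_ge0 //; lra.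
Qed.

Lemma send_limP x t :
  send_lim (x, t) <-> [/\ 0 <= t, send_lim (x, 0) & t <= lim_fuzzy x].
Proof.
split=> [Ct|[t0 C0 tv]]; last first.
  by apply: send_lim_down (send_lim_lim_fuzzy C0) _; rewrite t0 tv.
have /andP[t0 _] := (send_lim_sub_box Ct).2.
split => //; first by apply: send_lim_down Ct _; rewrite lexx t0.
exact: (sup_upper_bound (has_sup_send_lim Ct)) Ct.
Qed.

Lemma lim_fuzzy_eq0 x : ~ send_lim (x, 0) -> lim_fuzzy x = 0.
Proof.
move=> C0; rewrite /lim_fuzzy (_ : [set t | _] = set0) ?sup0 //.
by apply/seteqP; split => // t /send_limP [_ /C0].
Qed.

Lemma lim_fuzzy_gt0 x : 0 < lim_fuzzy x -> send_lim (x, 0).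
Proof. by move=> vx; apply: contrapT => /lim_fuzzy_eq0 v0; move: vx; rewrite v0 ltxx. Qed.

Lemma is_fuzzy_lim_fuzzy : is_fuzzy lim_fuzzy.
Proof.
move=> x; have [C0|nC0] := pselect (send_lim (x, 0)).
  exact: (send_lim_sub_box (send_lim_lim_fuzzy C0)).2.
by rewrite lim_fuzzy_eq0 // lexx ler01.
Qed.

Lemma cut0_lim_fuzzy x : cut0 d lim_fuzzy x <-> send_lim (x, 0).
Proof.
split=> [[_ clx]|C0].
  apply: closure_send_lim; split => // e e0; have [a [va xa]] := clx e e0.
  by exists (a, 0); split; [exact: lim_fuzzy_gt0 | rewrite dbar_level].
split => // e e0; have [delta delta0 lift] := send_lim_lift e0.
have [z Cz xz] := lift x C0.
exists z; split; last by rewrite /dE lte_fin.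
by have [_ _ ?] := (send_limP z delta).1 Cz; rewrite /=; lra.
Qed.

Lemma send_lim_fuzzy : send d lim_fuzzy = send_lim.
Proof.
apply/seteqP; split=> -[x t].
  by move=> [/andP[t0 _] [tv /cut0_lim_fuzzy C0]]; apply/send_limP.
move=> Ct; have [t0 C0 tv] := (send_limP x t).1 Ct.
by split; [exact: (send_lim_sub_box Ct).2 | split => //; exact/cut0_lim_fuzzy].
Qed.

Lemma cut_lim_fuzzy a : 0 < a -> cut lim_fuzzy a = [set x | send_lim (x, a)].
Proof.
move=> a0; apply/seteqP; split => x /= => [ax|/send_limP [] //].
by apply/send_limP; split; [exact: ltW | exact: lim_fuzzy_gt0 (lt_le_trans a0 ax) |].
Qed.

Lemma compact_cut0_lim_fuzzy : compact_in setT (dE d) (cut0 d lim_fuzzy).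
Proof.
have cut0_ulim z : (forall n, cut0 d lim_fuzzy (z n)) ->
    exists2 w, cut0 d lim_fuzzy w & ulim (dE d) z w.
  move=> cz; have {}cz n : send_lim (z n, 0) by apply/cut0_lim_fuzzy.
  have [w _ zw] :=
    compact_in_ulim dE_pm hY.2 (filterE _ (fun n => (send_lim_sub_box (cz n)).1)).
  exists w => //; apply/cut0_lim_fuzzy; apply: closure_send_lim; split => // e e0.
  by have [n zn] := filter_ex (zw e e0); exists (z n, 0); split; [|rewrite dbar_level].
have [x1 C1] := send_lim_top.
apply: (compact_in_of_ulim dE_pm cut0_ulim (x0 := x1)) => //.
by apply/cut0_lim_fuzzy; apply: send_lim_down C1 _; rewrite lexx ler01.
Qed.

Lemma FUSCB_lim_fuzzy : FUSCB d lim_fuzzy.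
Proof.
split; last exact: compact_cut0_lim_fuzzy.
split=> [|a /andP[a0 a1]]; first exact: is_fuzzy_lim_fuzzy.
have [x1 C1] := send_lim_top.
rewrite /cutA; case: eqP => [_|/eqP an0].
  split; last exact: closed_in_closure dE_pm _.
  by exists x1; apply/cut0_lim_fuzzy; apply: send_lim_down C1 _; rewrite lexx ler01.
have {an0 a0}a0 : 0 < a by rewrite lt_neqAle eq_sym an0.
rewrite cut_lim_fuzzy //; split; first by exists x1; apply: send_lim_down C1 _; rewrite ltW.
split => // x [_ clx]; apply: closure_send_lim; split => // e e0.
by have [y [Cy xy]] := clx e e0; exists (y, a); split; [|rewrite dbar_level].
Qed.

Lemma ultra_send_near_send_lim (e : R) : 0 < e -> F [set n | forall q, send d (u n) q ->
  exists2 c, send_lim c & (dbar d c q < e%:E)%E].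
Proof.
move=> e0; apply: ultra_contra => Fbad.
have /(partial_choice (filter_ex Fbad)) [q hq] : forall n, ~ (forall q,
      send d (u n) q -> exists2 c, send_lim c & (dbar d c q < e%:E)%E) ->
    exists q, send d (u n) q /\ forall c, send_lim c -> ~ (dbar d c q < e%:E)%E.
  move=> n /existsNP [q /not_implyP [sq far]].
  by exists q; split => // c Cc cq; apply: far; exists c.
have [c qc] := ulim_in_box (filterS (fun n bad => send_sub_box (hq n bad).1) Fbad).
have Cc : send_lim c.
  by apply: send_lim_ulim qc; apply: filterS Fbad => n /hq [].
have [n [cq bad]] := filter_ex (filterI (qc e e0) Fbad).
exact: (hq n bad).2 c Cc cq.
Qed.

Lemma ultra_send_lim_near_send (e : R) : 0 < e -> F [set n | forall c, send_lim c ->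
  exists2 q, send d (u n) q & (dbar d c q < e%:E)%E].
Proof.
move=> e0; apply: ultra_contra => Fbad.
have /(partial_choice (filter_ex Fbad)) [c hc] : forall n, ~ (forall c,
      send_lim c -> exists2 q, send d (u n) q & (dbar d c q < e%:E)%E) ->
    exists c, send_lim c /\ forall q, send d (u n) q -> ~ (dbar d c q < e%:E)%E.
  move=> n /existsNP [c /not_implyP [Cc far]].
  by exists c; split => // q sq cq; apply: far; exists q.
have [c' cc'] := ulim_in_box (filterS (fun n bad => send_lim_sub_box (hc n bad).1) Fbad).
have Cc' : send_lim c'.
  apply: closure_send_lim; split => // e' e'0.
  have [n [c'n bad]] := filter_ex (filterI (cc' e' e'0) Fbad).
  by exists (c n); split => //; exact: (hc n bad).1.
have e2 : 0 < e / 2 by rewrite divr_gt0.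
have [n [[q sq c'q] [c'n bad]]] := filter_ex (filterI (Cc' _ e2) (filterI (cc' _ e2) Fbad)).
move: c'n => /=; rewrite dbar_sym // => c'n.
have := dbar_tri hd c'n c'q; rewrite -splitr.
exact: (hc n bad).2 q sq.
Qed.

Lemma ulim_lim_fuzzy : ulim (Hsend d) u lim_fuzzy.
Proof.
move=> e e0; have e2 : 0 < e / 2 by rewrite divr_gt0.
apply: filterS (filterI (ultra_send_near_send_lim e2) (ultra_send_lim_near_send e2)).
move=> n [near_lim near_send] /=; rewrite /Hsend send_lim_fuzzy.
by apply: le_lt_trans (hausdorff_le near_send near_lim) _; rewrite lte_fin; lra.
Qed.

End LimitFuzzySet.

Lemma relcompact_of_U0_equi :
  relcompact_in setT (dE d) (U0 d U) -> equi_right_cont0 d U ->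
  relcompact_in (FUSCB d) (Hsend d) U.
Proof.
move=> hY heq; have [x [u0 Uu0 _]] := relcompact_in_nonempty hY.
apply: (relcompact_in_of_ulim Hsend_pm hU Uu0) => u hu.
by exists (lim_fuzzy u); [apply: FUSCB_lim_fuzzy | apply: ulim_lim_fuzzy].
Qed.

End Fuzzy.

End UltraLimits.

Theorem theorem5p15 (R : realType) (X : Type) (d : X -> X -> R)
  (hd : is_metric d) (U : set (X -> R)) (hU : U `<=` FUSCB d) :
  relcompact_in (FUSCB d) (Hsend d) U <->
  (relcompact_in setT (dE d) (U0 d U) /\ equi_right_cont0 d U).
Proof.
have [F [F_ultra F_free]] := ultraFilterLemma eventually_filter.
split=> [relU|[relU0 equi]].
  split; first exact (relcompact_U0 F_free hd hU relU).
  exact (relcompact_equi_right_cont0 F_free hd hU relU).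
exact (relcompact_of_U0_equi F_free hd hU relU0 equi).
Qed.
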